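(* For types $\sigma,\tau\in\mathbb{T}_C$: $\sigma\le\tau$ if and only if for each path $\pi\in\mathbb{P}(\tau)$ there exists a path $\pi'\in\mathbb{P}(\sigma)$ with $\pi'\le\pi$ such that: if $\pi\equiv\alpha$ (resp. $\pi\equiv a$) then $\pi'\equiv\alpha$ (resp. $\pi'\equiv a$); if $\pi\equiv\sigma_2\to\tau_2$ then $\pi'\equiv\sigma_1\to\tau_1$ with $\sigma_2\le\sigma_1$ and $\tau_1\le\tau_2$; if $\pi\equiv c(\tau_1)$ then $\pi'\equiv c(\sigma_1)$ with $\sigma_1\le\tau_1$.
   Context: Types $\mathbb{T}_C\ni\tau ::= a\mid\alpha\mid\omega\mid\tau_1\to\tau_2\mid\tau_1\cap\tau_2\mid c(\tau)$ ($a$ constants, $\alpha$ type variables, $c$ unary constructors). Subtyping $\le$: least preorder with $\sigma\le\omega$; $\omega\le\omega\to\omega$; $\sigma\cap\tau\le\sigma$; $\sigma\cap\tau\le\tau$; $\sigma\le\tau_1,\sigma\le\tau_2\Rightarrow\sigma\le\tau_1\cap\tau_2$; $(\sigma\to\tau_1)\cap(\sigma\to\tau_2)\le\sigma\to\tau_1\cap\tau_2$; $\sigma_2\le\sigma_1,\tau_1\le\tau_2\Rightarrow\sigma_1\to\tau_1\le\sigma_2\to\tau_2$; $\tau_1\le\tau_2\Rightarrow c(\tau_1)\le c(\tau_2)$; $c(\tau_1)\cap c(\tau_2)\le c(\tau_1\cap\tau_2)$. Paths: $\pi ::= a\mid\alpha\mid\sigma\to\pi\mid c(\omega)\mid c(\pi)$.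 $\mathbb{P}(a)=\{a\}$, $\mathbb{P}(\alpha)=\{\alpha\}$, $\mathbb{P}(\omega)=\emptyset$, $\mathbb{P}(\sigma\to\tau)=\{\sigma\to\pi\mid\pi\in\mathbb{P}(\tau)\}$, $\mathbb{P}(\sigma\cap\tau)=\mathbb{P}(\sigma)\cup\mathbb{P}(\tau)$, $\mathbb{P}(c(\tau))=\{c(\omega)\}$ if $\mathbb{P}(\tau)=\emptyset$, else $\{c(\pi)\mid\pi\in\mathbb{P}(\tau)\}$. $\equiv$ denotes syntactic identity. *)

From Stdlib Require Import List.
Import ListNotations.
Set Implicit Arguments.

Section Types.
Variables A V C : Type.

Inductive ty : Type :=
| Const : A -> ty
| Var : V -> ty
| Omega : ty
| Arr : ty -> ty -> ty
| Cap : ty -> ty -> ty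
| Ctor : C -> ty -> ty.

Inductive sub : ty -> ty -> Prop :=
| sub_refl : forall s, sub s s
| sub_trans : forall s t u, sub s t -> sub t u -> sub s u
| sub_omega : forall s, sub s Omega
| sub_omega_arr : sub Omega (Arr Omega Omega)
| sub_capl : forall s t, sub (Cap s t) s
| sub_capr : forall s t, sub (Cap s t) t
| sub_glb : forall s t1 t2, sub s t1 -> sub s t2 -> sub s (Cap t1 t2)
| sub_arr_cap : forall s t1 t2,
    sub (Cap (Arr s t1) (Arr s t2)) (Arr s (Cap t1 t2))
| sub_arr : forall s1 s2 t1 t2, sub s2 s1 -> sub t1 t2 -> sub (Arr s1 t1) (Arr s2 t2)
| sub_ctor : forall c t1 t2, sub t1 t2 -> sub (Ctor c t1) (Ctor c t2)
| sub_ctor_cap : forall c t1 t2,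
    sub (Cap (Ctor c t1) (Ctor c t2)) (Ctor c (Cap t1 t2)).

Fixpoint paths (t : ty) : list ty :=
  match t with
  | Const a => [Const a]
  | Var x => [Var x]
  | Omega => []
  | Arr s t' => map (fun p => Arr s p) (paths t')
  | Cap s t' => paths s ++ paths t'
  | Ctor c t' =>
      match paths t' with
      | [] => [Ctor c Omega]
      | ps => map (fun p => Ctor c p) ps
      end
  end.

Definition path_match (pi' pi : ty) : Prop :=
  match pi with
  | Var x => pi' = Var x
  | Const a => pi' = Const a
  | Arr s2 t2 => exists s1 t1, pi' = Arr s1 t1 /\ sub s2 s1 /\ sub t1 t2
  | Ctor c t1 => exists s1, pi' = Ctor c s1 /\ sub s1 t1
  | Omega => False   (* not a path *)
  | Cap _ _ => False (* not a path *)
  end.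

End Types.

(* For "only if", the relation "every path of tau is dominated by a matching
   path of sigma" contains each subtyping rule and is transitive, because
   matching is transitive; so it contains subtyping.  For "if", every path of
   sigma lies above sigma, and tau lies above the intersection of its paths,
   since arrows and constructors distribute over intersections (with
   omega <= omega -> omega covering arrows whose codomain has no path). *)
From Stdlib Require Import List.
Import ListNotations.

Section Paths.

Variables A V C : Type.
Implicit Types s t pi : ty A V C.

Local Notation omega := (Omega A V C).

Definition bigcap (l : list (ty A V C)) : ty A V C := fold_right (@Cap A V C) omega l.

Lemma sub_bigcap s l : (forall x, In x l -> sub s x) -> sub s (bigcap l).
Proof.
  induction l as [|x l IH]; simpl; intros Hl.
  - apply sub_omega.
  - apply sub_glb; auto.
Qed.

Lemma bigcap_sub_In l x : In x l -> sub (bigcap l) x.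
Proof.
  induction l as [|y l IH]; simpl; intros Hx; [contradiction|].
  destruct Hx as [<- | Hx].
  - apply sub_capl.
  - eapply sub_trans; [apply sub_capr | auto].
Qed.

Lemma bigcap_sub_incl l l' : incl l' l -> sub (bigcap l) (bigcap l').
Proof.
  intros Hincl. apply sub_bigcap. intros x Hx. apply bigcap_sub_In, Hincl, Hx.
Qed.

Lemma bigcap_map_Arr s l : sub (bigcap (map (Arr s) l)) (Arr s (bigcap l)).
Proof.
  induction l as [|t l IH]; simpl.
  - eapply sub_trans; [apply sub_omega_arr|].
    apply sub_arr; [apply sub_omega | apply sub_refl].
  - eapply sub_trans; [|apply sub_arr_cap].
    apply sub_glb; [apply sub_capl|].
    eapply sub_trans; [apply sub_capr | exact IH].
Qed.

Lemma bigcap_map_Ctor c l :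
  l <> [] -> sub (bigcap (map (Ctor c) l)) (Ctor c (bigcap l)).
Proof.
  induction l as [|t [|t' l] IH]; intros Hl; [congruence| |].
  - simpl. eapply sub_trans; [apply sub_capl|].
    apply sub_ctor, sub_glb; [apply sub_refl | apply sub_omega].
  - eapply sub_trans; [|apply sub_ctor_cap].
    apply sub_glb; [apply sub_capl|].
    eapply sub_trans; [apply sub_capr | apply IH; discriminate].
Qed.

Lemma in_paths_Ctor c t pi :
  In pi (paths (Ctor c t)) <->
  (paths t = [] /\ pi = Ctor c omega) \/
  (exists p, pi = Ctor c p /\ In p (paths t)).
Proof.
  simpl. destruct (paths t) as [|p ps].
  - split.
    + intros [<- | []]. left; auto.
    + intros [[_ ->] | [p [_ []]]]. left; reflexivity.
  - change (In pi (map (Ctor c) (p :: ps)) <->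
            (p :: ps = [] /\ pi = Ctor c omega) \/
            (exists q, pi = Ctor c q /\ In q (p :: ps))).
    rewrite in_map_iff. split.
    + intros [q [<- Hq]]. right; eauto.
    + intros [[Hnil _] | [q [-> Hq]]]; [discriminate | eauto].
Qed.

Lemma bigcap_paths_sub t : sub (bigcap (paths t)) t.
Proof.
  induction t as [a | x | | s _ t IH | s IHs t IHt | c t IH]; simpl.
  - apply sub_capl.
  - apply sub_capl.
  - apply sub_omega.
  - eapply sub_trans; [apply bigcap_map_Arr|].
    apply sub_arr; [apply sub_refl | exact IH].
  - apply sub_glb.
    + eapply sub_trans; [|exact IHs]. apply bigcap_sub_incl, incl_appl, incl_refl.
    + eapply sub_trans; [|exact IHt]. apply bigcap_sub_incl, incl_appr, incl_refl.
  - destruct (paths t) as [|p ps].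
    + eapply sub_trans; [apply sub_capl|]. apply sub_ctor, IH.
    + eapply sub_trans; [apply (bigcap_map_Ctor c (p :: ps)); discriminate|].
      apply sub_ctor, IH.
Qed.

Lemma sub_In_paths s pi : In pi (paths s) -> sub s pi.
Proof.
  revert pi.
  induction s as [a | x | | s _ t IH | s IHs t IHt | c t IH]; simpl; intros pi Hpi.
  - destruct Hpi as [<- | []]; apply sub_refl.
  - destruct Hpi as [<- | []]; apply sub_refl.
  - contradiction.
  - apply in_map_iff in Hpi as [p [<- Hp]].
    apply sub_arr; [apply sub_refl | auto].
  - apply in_app_or in Hpi as [Hpi | Hpi].
    + eapply sub_trans; [apply sub_capl | auto].
    + eapply sub_trans; [apply sub_capr | auto].
  - apply (in_paths_Ctor c t pi) in Hpi as [[_ ->] | [p [-> Hp]]].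
    + apply sub_ctor, sub_omega.
    + apply sub_ctor; auto.
Qed.

Lemma path_match_In_paths t pi : In pi (paths t) -> path_match pi pi.
Proof.
  revert pi.
  induction t as [a | x | | s _ t IH | s IHs t IHt | c t IH]; simpl; intros pi Hpi.
  - destruct Hpi as [<- | []]; reflexivity.
  - destruct Hpi as [<- | []]; reflexivity.
  - contradiction.
  - apply in_map_iff in Hpi as [p [<- _]].
    exists s, p; split; [reflexivity | split; apply sub_refl].
  - apply in_app_or in Hpi as [Hpi | Hpi]; auto.
  - apply (in_paths_Ctor c t pi) in Hpi as [[_ ->] | [p [-> _]]];
      simpl; eexists; split; (reflexivity || apply sub_refl).
Qed.

Lemma path_match_trans (p1 p2 p3 : ty A V C) :
  path_match p1 p2 -> path_match p2 p3 -> path_match p1 p3.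
Proof.
  destruct p3 as [a | x | | s3 t3 | | c t3]; simpl; intros H12 H23;
    try contradiction; subst; simpl in H12; auto.
  - destruct H23 as [s2 [t2 [-> [Hs23 Ht23]]]].
    destruct H12 as [s1 [t1 [-> [Hs12 Ht12]]]].
    exists s1, t1; split; [reflexivity | split; eapply sub_trans; eauto].
  - destruct H23 as [t2 [-> Ht23]].
    destruct H12 as [t1 [-> Ht12]].
    exists t1; split; [reflexivity | eapply sub_trans; eauto].
Qed.

Definition paths_dominate s t : Prop :=
  forall pi, In pi (paths t) ->
    exists pi', In pi' (paths s) /\ sub pi' pi /\ path_match pi' pi.

Lemma paths_dominate_incl s t : incl (paths t) (paths s) -> paths_dominate s t.
Proof.
  intros Hincl pi Hpi. exists pi.
  split; [auto | split; [apply sub_refl | eapply path_match_In_paths; eauto]].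
Qed.

Lemma paths_dominate_trans s t u :
  paths_dominate s t -> paths_dominate t u -> paths_dominate s u.
Proof.
  intros Hst Htu pi Hpi.
  destruct (Htu pi Hpi) as [p [Hp [Hsub Hmatch]]].
  destruct (Hst p Hp) as [p' [Hp' [Hsub' Hmatch']]].
  exists p'; split; [exact Hp' | split].
  - eapply sub_trans; eauto.
  - eapply path_match_trans; eauto.
Qed.

Lemma paths_dominate_Arr s1 s2 t1 t2 :
  sub s2 s1 -> paths_dominate t1 t2 -> paths_dominate (Arr s1 t1) (Arr s2 t2).
Proof.
  intros Hs Ht pi Hpi. simpl in Hpi.
  apply in_map_iff in Hpi as [p [<- Hp]].
  destruct (Ht p Hp) as [p' [Hp' [Hsub _]]].
  exists (Arr s1 p'); split; [apply in_map, Hp' | split].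
  - apply sub_arr; assumption.
  - exists s1, p'; auto.
Qed.

Lemma paths_dominate_Ctor c t1 t2 :
  paths_dominate t1 t2 -> paths_dominate (Ctor c t1) (Ctor c t2).
Proof.
  intros Ht pi Hpi.
  apply in_paths_Ctor in Hpi as [[_ ->] | [p [-> Hp]]].
  - assert (Hq : exists q, In (Ctor c q) (paths (Ctor c t1))).
    { simpl. destruct (paths t1) as [|q qs]; [exists omega | exists q]; left; reflexivity. }
    destruct Hq as [q Hq].
    exists (Ctor c q); split; [exact Hq | split].
    + apply sub_ctor, sub_omega.
    + exists q; split; [reflexivity | apply sub_omega].
  - destruct (Ht p Hp) as [p' [Hp' [Hsub _]]].
    exists (Ctor c p'); split; [|split].
    + apply in_paths_Ctor; right; eauto.
    + apply sub_ctor, Hsub.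
    + exists p'; auto.
Qed.

Lemma paths_Ctor_Cap_incl c t1 t2 :
  incl (paths (Ctor c (Cap t1 t2))) (paths (Cap (Ctor c t1) (Ctor c t2))).
Proof.
  intros pi Hpi. change (In pi (paths (Ctor c t1) ++ paths (Ctor c t2))).
  apply in_app_iff.
  rewrite !in_paths_Ctor.
  apply in_paths_Ctor in Hpi as [[Hnil ->] | [p [-> Hp]]].
  - apply app_eq_nil in Hnil as [Hnil _]. left; left; auto.
  - apply in_app_or in Hp as [Hp | Hp]; [left | right]; right; eauto.
Qed.

Lemma sub_paths_dominate s t : sub s t -> paths_dominate s t.
Proof.
  induction 1.
  - apply paths_dominate_incl, incl_refl.
  - eapply paths_dominate_trans; eauto.
  - intros pi [].
  - intros pi [].
  - apply paths_dominate_incl, incl_appl, incl_refl.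
  - apply paths_dominate_incl, incl_appr, incl_refl.
  - intros pi Hpi. apply in_app_or in Hpi as [Hpi | Hpi]; auto.
  - apply paths_dominate_incl. simpl. rewrite map_app. apply incl_refl.
  - apply paths_dominate_Arr; assumption.
  - apply paths_dominate_Ctor; assumption.
  - apply paths_dominate_incl, paths_Ctor_Cap_incl.
Qed.

Lemma paths_dominate_sub s t : paths_dominate s t -> sub s t.
Proof.
  intros Hdom. eapply sub_trans; [|apply bigcap_paths_sub].
  apply sub_bigcap. intros pi Hpi.
  destruct (Hdom pi Hpi) as [p [Hp [Hsub _]]].
  eapply sub_trans; [apply sub_In_paths, Hp | exact Hsub].
Qed.

End Paths.

Theorem lemma4p10 (A V C : Type) (sigma tau : ty A V C) :
  sub sigma tau <->
  (forall pi, In pi (paths tau) ->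
     exists pi', In pi' (paths sigma) /\ sub pi' pi /\ path_match pi' pi).
Proof.
  split.
  - apply sub_paths_dominate.
  - apply paths_dominate_sub.
Qed.
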